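(* Let $\Psi,\alpha,\Psi'$ be a well-formed declarative context and $\tau$ a monotype with $\Psi\vdash\tau$. Then: (1) If $\Psi,\alpha,\Psi'\vdash e'\Leftarrow C$ then $\Psi,[\tau/\alpha]\Psi'\vdash[\tau/\alpha]e'\Leftarrow[\tau/\alpha]C$. (2) If $\Psi,\alpha,\Psi'\vdash e'\Rightarrow C$ then $\Psi,[\tau/\alpha]\Psi'\vdash[\tau/\alpha]e'\Rightarrow[\tau/\alpha]C$. (3) If $\Psi,\alpha,\Psi'\vdash e'\bullet B\Rightarrow\!\!\Rightarrow C$ then $\Psi,[\tau/\alpha]\Psi'\vdash[\tau/\alpha]e'\bullet[\tau/\alpha]B\Rightarrow\!\!\Rightarrow[\tau/\alpha]C$. Moreover, in each case the resulting derivation contains no more applications of typing rules than the given one (applications of subtyping rules inside the derivation are not counted).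
   Context: Types $A,B,C ::= 1\mid\alpha\mid\forall\alpha.A\mid A\to B$; monotypes $\sigma,\tau ::= 1\mid\alpha\mid\sigma\to\tau$; declarative contexts $\Psi ::= \cdot\mid\Psi,\alpha\mid\Psi,x:A$. $[\tau/\alpha]$ denotes capture-avoiding substitution, applied to types, to all types in a context, and to all type annotations in a term. Well-formedness $\Psi\vdash A$: all free type variables of $A$ are declared in $\Psi$. Declarative subtyping $\Psi\vdash A\le B$: least relation with $\alpha\in\Psi\Rightarrow\Psi\vdash\alpha\le\alpha$; $\Psi\vdash1\le1$; ($\Psi\vdash B_1\le A_1$, $\Psi\vdash A_2\le B_2$) $\Rightarrow\Psi\vdash A_1\to A_2\le B_1\to B_2$; ($\Psi\vdash\sigma$ monotype, $\Psi\vdash[\sigma/\beta]A\le B$) $\Rightarrow\Psi\vdash\forall\beta.A\le B$; $\Psi,\beta\vdash A\le B\Rightarrow\Psi\vdash A\le\forall\beta.B$. Terms $e ::= x\mid()\mid\lambda x.e\mid e_1\,e_2\mid(e:A)$. The typing rules (checking $\Leftarrow$, synthesis $\Rightarrow$, application $e\bullet A\Rightarrow\!\!\Rightarrow C$) are: $(x:A)\in\Psi\Rightarrow\Psi\vdash x\Rightarrow A$; ($\Psi\vdash e\Rightarrow A$, $\Psi\vdash A\le B$) $\Rightarrow\Psi\vdash e\Leftarrow B$; ($\Psi\vdash A$, $\Psi\vdash e\Leftarrow A$) $\Rightarrow\Psi\vdash(e:A)\Rightarrow A$; $\Psi\vdash()\Leftarrow1$; $\Psi\vdash()\Rightarrow1$;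 $\Psi,\beta\vdash e\Leftarrow A\Rightarrow\Psi\vdash e\Leftarrow\forall\beta.A$; ($\Psi\vdash\sigma$ monotype, $\Psi\vdash e\bullet[\sigma/\beta]A\Rightarrow\!\!\Rightarrow C$) $\Rightarrow\Psi\vdash e\bullet\forall\beta.A\Rightarrow\!\!\Rightarrow C$; $\Psi,x:A\vdash e\Leftarrow B\Rightarrow\Psi\vdash\lambda x.e\Leftarrow A\to B$; ($\Psi\vdash\sigma\to\sigma'$ monotypes, $\Psi,x:\sigma\vdash e\Leftarrow\sigma'$) $\Rightarrow\Psi\vdash\lambda x.e\Rightarrow\sigma\to\sigma'$; ($\Psi\vdash e_1\Rightarrow A$, $\Psi\vdash e_2\bullet A\Rightarrow\!\!\Rightarrow C$) $\Rightarrow\Psi\vdash e_1\,e_2\Rightarrow C$; $\Psi\vdash e\Leftarrow A\Rightarrow\Psi\vdash e\bullet A\to C\Rightarrow\!\!\Rightarrow C$. *)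

(* Types are in locally nameless style: bound type variables are de Bruijn
   indices (TBVar), free type variables are names (TFVar a, a : nat).
   Term variables are names (nat); terms are not substituted, only the type
   annotations inside them. *)
From Stdlib Require Import List Arith.
Import ListNotations.

Inductive ty : Type :=
| TUnit : ty
| TBVar : nat -> ty
| TFVar : nat -> ty
| TAll  : ty -> ty           (* forall beta. A, body uses TBVar 0 for beta *)
| TArr  : ty -> ty -> ty.

Inductive tm : Type :=
| Var  : nat -> tm
| Unit : tm
| Lam  : nat -> tm -> tm
| App  : tm -> tm -> tm
| Anno : tm -> ty -> tm.

Inductive centry : Type :=
| CTVar : nat -> centry
| CVar  : nat -> ty -> centry.

(* contexts in declaration order: "Psi, entry" is Psi ++ [entry] *)
Definition ctx := list centry.

Fixpoint fv (A : ty) : list nat :=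
  match A with
  | TUnit => []
  | TBVar _ => []
  | TFVar a => [a]
  | TAll A => fv A
  | TArr A B => fv A ++ fv B
  end.

Fixpoint lc_at (k : nat) (A : ty) : Prop :=
  match A with
  | TUnit => True
  | TBVar i => i < k
  | TFVar _ => True
  | TAll A => lc_at (S k) A
  | TArr A B => lc_at k A /\ lc_at k B
  end.

Fixpoint open_rec (k : nat) (U : ty) (A : ty) : ty :=
  match A with
  | TUnit => TUnit
  | TBVar i => if Nat.eqb i k then U else TBVar i
  | TFVar a => TFVar a
  | TAll A => TAll (open_rec (S k) U A)
  | TArr A B => TArr (open_rec k U A) (open_rec k U B)
  end.

Definition open (A U : ty) : ty := open_rec 0 U A.

Fixpoint subst_ty (a : nat) (tau : ty) (A : ty) : ty :=
  match A with
  | TUnit => TUnit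
  | TBVar i => TBVar i
  | TFVar b => if Nat.eqb b a then tau else TFVar b
  | TAll A => TAll (subst_ty a tau A)
  | TArr A B => TArr (subst_ty a tau A) (subst_ty a tau B)
  end.

Fixpoint subst_tm (a : nat) (tau : ty) (e : tm) : tm :=
  match e with
  | Var x => Var x
  | Unit => Unit
  | Lam x e => Lam x (subst_tm a tau e)
  | App e1 e2 => App (subst_tm a tau e1) (subst_tm a tau e2)
  | Anno e A => Anno (subst_tm a tau e) (subst_ty a tau A)
  end.

Definition subst_entry (a : nat) (tau : ty) (c : centry) : centry :=
  match c with
  | CTVar b => CTVar b
  | CVar x A => CVar x (subst_ty a tau A)
  end.

Definition subst_ctx (a : nat) (tau : ty) (G : ctx) : ctx :=
  map (subst_entry a tau) G.

Fixpoint tvars (G : ctx) : list nat :=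
  match G with
  | [] => []
  | CTVar b :: G => b :: tvars G
  | CVar _ _ :: G => tvars G
  end.

Fixpoint vars (G : ctx) : list nat :=
  match G with
  | [] => []
  | CTVar _ :: G => vars G
  | CVar x _ :: G => x :: vars G
  end.

Definition wf_ty (G : ctx) (A : ty) : Prop :=
  lc_at 0 A /\ (forall b, In b (fv A) -> In (CTVar b) G).

Fixpoint mono (A : ty) : Prop :=
  match A with
  | TAll _ => False
  | TArr A B => mono A /\ mono B
  | _ => True
  end.

Inductive wf_ctx : ctx -> Prop :=
| wf_nil : wf_ctx []
| wf_tvar : forall G b, wf_ctx G -> ~ In b (tvars G) -> wf_ctx (G ++ [CTVar b])
| wf_var : forall G x A, wf_ctx G -> ~ In x (vars G) -> wf_ty G A ->
    wf_ctx (G ++ [CVar x A]).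

Inductive sub : ctx -> ty -> ty -> Prop :=
| S_Var : forall G b, In (CTVar b) G -> sub G (TFVar b) (TFVar b)
| S_Unit : forall G, sub G TUnit TUnit
| S_Arr : forall G A1 A2 B1 B2,
    sub G B1 A1 -> sub G A2 B2 -> sub G (TArr A1 A2) (TArr B1 B2)
| S_AllL : forall G s A B,
    mono s -> wf_ty G s -> sub G (open A s) B -> sub G (TAll A) B
| S_AllR : forall G b A B,
    ~ In (CTVar b) G -> ~ In b (fv A) -> ~ In b (fv B) ->
    sub (G ++ [CTVar b]) A (open B (TFVar b)) -> sub G A (TAll B).

(* Typing judgments, indexed by the number n of typing-rule applications
   in the derivation (subtyping / well-formedness premises are not counted).
   chk G e A n  :  G |- e <= A
   syn G e A n  :  G |- e => A
   appj G e A C n:  G |- e . A =>> C *)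
Inductive chk : ctx -> tm -> ty -> nat -> Prop :=
| C_Sub : forall G e A B n, syn G e A n -> sub G A B -> chk G e B (S n)
| C_Unit : forall G, chk G Unit TUnit 1
| C_AllI : forall G e b A n,
    ~ In (CTVar b) G -> ~ In b (fv A) ->
    chk (G ++ [CTVar b]) e (open A (TFVar b)) n -> chk G e (TAll A) (S n)
| C_ArrI : forall G x e A B n,
    chk (G ++ [CVar x A]) e B n -> chk G (Lam x e) (TArr A B) (S n)
with syn : ctx -> tm -> ty -> nat -> Prop :=
| Y_Var : forall G x A, In (CVar x A) G -> syn G (Var x) A 1
| Y_Anno : forall G e A n, wf_ty G A -> chk G e A n -> syn G (Anno e A) A (S n)
| Y_Unit : forall G, syn G Unit TUnit 1
| Y_ArrI : forall G x e s s' n,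
    mono s -> mono s' -> wf_ty G (TArr s s') ->
    chk (G ++ [CVar x s]) e s' n -> syn G (Lam x e) (TArr s s') (S n)
| Y_ArrE : forall G e1 e2 A C n1 n2,
    syn G e1 A n1 -> appj G e2 A C n2 -> syn G (App e1 e2) C (S (n1 + n2))
with appj : ctx -> tm -> ty -> ty -> nat -> Prop :=
| A_All : forall G e s A C n,
    mono s -> wf_ty G s -> appj G e (open A s) C n -> appj G e (TAll A) C (S n)
| A_Arr : forall G e A C n, chk G e A n -> appj G e (TArr A C) C (S n).

(* Substituting the monotype [tau] for [alpha] commutes with opening binders
   (because [tau] is locally closed) and maps every judgement rule instance to
   an instance of the same rule, so a mutual induction on typing derivations
   produces a derivation of exactly the same size.  The only side conditions
   are that [tau] is well formed in [Psi], which keeps well-formedness and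
   freshness premises valid, and that the types in [Psi] do not mention
   [alpha], which holds because [alpha] is declared after them. *)
From Stdlib Require Import List Arith Lia.
Import ListNotations.

Lemma lc_at_weaken A k j : lc_at k A -> k <= j -> lc_at j A.
Proof.
  revert k j; induction A; simpl; intros k j Hlc Hkj; auto; try lia.
  - apply (IHA (S k)); auto; lia.
  - destruct Hlc; split; eauto.
Qed.

Lemma open_rec_lc A k U : lc_at k A -> open_rec k U A = A.
Proof.
  revert k; induction A; simpl; intros k Hlc; auto.
  - destruct (Nat.eqb_spec n k); auto; lia.
  - rewrite IHA; auto.
  - destruct Hlc; rewrite IHA1, IHA2; auto.
Qed.

Lemma subst_ty_open_rec a tau A k U : lc_at 0 tau ->
  subst_ty a tau (open_rec k U A) =
  open_rec k (subst_ty a tau U) (subst_ty a tau A).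
Proof.
  intros Htau; revert k; induction A; simpl; intros k; auto.
  - destruct (Nat.eqb n k); auto.
  - destruct (Nat.eqb n a); simpl; auto.
    rewrite open_rec_lc; auto. apply (lc_at_weaken _ 0); auto; lia.
  - rewrite IHA; auto.
  - rewrite IHA1, IHA2; auto.
Qed.

Lemma subst_ty_fresh a tau A : ~ In a (fv A) -> subst_ty a tau A = A.
Proof.
  induction A; simpl; intros Ha; auto.
  - destruct (Nat.eqb_spec n a); subst; tauto.
  - rewrite IHA; auto.
  - rewrite in_app_iff in Ha. rewrite IHA1, IHA2; auto.
Qed.

Lemma fv_subst_ty a tau A b : In b (fv (subst_ty a tau A)) ->
  In b (fv tau) \/ (In b (fv A) /\ b <> a).
Proof.
  induction A; simpl; intros Hb; auto.
  - destruct (Nat.eqb_spec n a); auto.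
    destruct Hb as [<- | []]. right; auto.
  - rewrite in_app_iff in *.
    destruct Hb as [Hb | Hb]; [destruct (IHA1 Hb) | destruct (IHA2 Hb)]; tauto.
Qed.

Lemma lc_at_subst_ty a tau A k : lc_at k A -> lc_at 0 tau ->
  lc_at k (subst_ty a tau A).
Proof.
  revert k; induction A; simpl; intros k HA Htau; auto.
  - destruct (Nat.eqb n a); simpl; auto. apply (lc_at_weaken _ 0); auto; lia.
  - destruct HA; split; auto.
Qed.

Lemma mono_subst_ty a tau A : mono A -> mono tau -> mono (subst_ty a tau A).
Proof.
  induction A; simpl; intros HA Htau; auto.
  - destruct (Nat.eqb n a); simpl; auto.
  - destruct HA; split; auto.
Qed.

Lemma sub_refl_mono G A : mono A -> wf_ty G A -> sub G A A.
Proof.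
  intros Hmono [Hlc Hfv]; induction A; simpl in *; try lia; try contradiction.
  - constructor.
  - constructor; auto.
  - destruct Hmono, Hlc.
    constructor; [apply IHA1 | apply IHA2]; auto;
      intros b Hb; apply Hfv, in_or_app; auto.
Qed.

Lemma in_subst_ctx_tvar a tau G b :
  In (CTVar b) (subst_ctx a tau G) <-> In (CTVar b) G.
Proof.
  unfold subst_ctx. rewrite in_map_iff. split.
  - intros [[c | x A] [Hc Hin]]; inversion Hc; subst; auto.
  - intros Hin. exists (CTVar b); auto.
Qed.

Lemma in_tvars_iff G b : In (CTVar b) G <-> In b (tvars G).
Proof.
  induction G as [| [c | x A] G IH]; simpl; [tauto | |].
  - rewrite <- IH. split; intros [E | Hin]; auto; left; congruence.
  - rewrite <- IH. split; [intros [E | Hin]; [discriminate | auto] | auto].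
Qed.

Lemma wf_ctx_app_l G1 G2 : wf_ctx (G1 ++ G2) -> wf_ctx G1.
Proof.
  revert G1; induction G2 as [| c G2 IH] using rev_ind; intros G1 Hwf.
  - rewrite app_nil_r in Hwf; auto.
  - rewrite app_assoc in Hwf. apply IH.
    inversion Hwf as [E | G b HG _ E | G x A HG _ _ E];
      [destruct (G1 ++ G2); discriminate | |];
      apply app_inj_tail in E; destruct E; subst; auto.
Qed.

Lemma wf_ctx_var_fv G x A b :
  wf_ctx G -> In (CVar x A) G -> In b (fv A) -> In (CTVar b) G.
Proof.
  intros Hwf; induction Hwf as [| G c Hwf IH _ | G y B Hwf IH _ [_ HB]];
    intros Hin Hb; [destruct Hin | |];
    rewrite in_app_iff in *; destruct Hin as [Hin | [E | []]]; eauto.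
  - discriminate.
  - inversion E; subst; auto.
Qed.

Lemma wf_ctx_snoc_tvar_fresh G a : wf_ctx (G ++ [CTVar a]) -> ~ In (CTVar a) G.
Proof.
  rewrite in_tvars_iff.
  inversion 1 as [E | G' b _ Hb E | G' x A _ _ _ E]; [destruct G; discriminate | |];
    apply app_inj_tail in E; destruct E as [<- E];
    [inversion E; subst; auto | discriminate].
Qed.

Lemma wf_ctx_prefix_types_fresh Psi Psi' alpha x A :
  wf_ctx (Psi ++ CTVar alpha :: Psi') -> In (CVar x A) Psi -> ~ In alpha (fv A).
Proof.
  intros Hwf Hin Halpha.
  assert (Hpre : wf_ctx (Psi ++ [CTVar alpha])).
  { apply (wf_ctx_app_l _ Psi'). rewrite <- app_assoc. exact Hwf. }
  apply (wf_ctx_snoc_tvar_fresh _ _ Hpre).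
  apply (wf_ctx_var_fv _ x A); auto.
  apply (wf_ctx_app_l _ [CTVar alpha]); auto.
Qed.

Lemma app_cons_snoc {T} (l1 l2 : list T) (a c : T) :
  (l1 ++ a :: l2) ++ [c] = l1 ++ a :: (l2 ++ [c]).
Proof. rewrite <- app_assoc. reflexivity. Qed.

Section SubstTvar.

Variables (Psi : ctx) (alpha : nat) (tau : ty).
Hypothesis tau_mono : mono tau.
Hypothesis tau_wf : wf_ty Psi tau.
Hypothesis Psi_types_fresh : forall x A, In (CVar x A) Psi -> ~ In alpha (fv A).

Lemma subst_ctx_snoc Psi' c :
  Psi ++ subst_ctx alpha tau (Psi' ++ [c]) =
  (Psi ++ subst_ctx alpha tau Psi') ++ [subst_entry alpha tau c].
Proof. unfold subst_ctx. rewrite map_app, app_assoc. reflexivity. Qed.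

Lemma subst_open A s :
  subst_ty alpha tau (open A s) = open (subst_ty alpha tau A) (subst_ty alpha tau s).
Proof. apply subst_ty_open_rec, tau_wf. Qed.

Lemma subst_open_tvar A b : b <> alpha ->
  subst_ty alpha tau (open A (TFVar b)) = open (subst_ty alpha tau A) (TFVar b).
Proof.
  intros Hb. rewrite subst_open. simpl.
  destruct (Nat.eqb_spec b alpha); congruence.
Qed.

Lemma in_ctx_subst_tvar Psi' b : b <> alpha ->
  In (CTVar b) (Psi ++ CTVar alpha :: Psi') ->
  In (CTVar b) (Psi ++ subst_ctx alpha tau Psi').
Proof.
  intros Hb Hin. rewrite in_app_iff in *. simpl in Hin.
  destruct Hin as [Hin | [E | Hin]]; auto.
  - inversion E; congruence.
  - right. apply in_subst_ctx_tvar; auto.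
Qed.

Lemma wf_ty_subst Psi' A : wf_ty (Psi ++ CTVar alpha :: Psi') A ->
  wf_ty (Psi ++ subst_ctx alpha tau Psi') (subst_ty alpha tau A).
Proof.
  intros [Hlc Hfv]. split.
  - apply lc_at_subst_ty; auto. apply tau_wf.
  - intros b Hb. destruct (fv_subst_ty _ _ _ _ Hb) as [Htau | [HA Hneq]].
    + apply in_or_app. left. apply tau_wf; auto.
    + apply in_ctx_subst_tvar; auto.
Qed.

Section FreshTvar.

Variables (Psi' : ctx) (b : nat).
Hypothesis b_fresh : ~ In (CTVar b) (Psi ++ CTVar alpha :: Psi').

Lemma fresh_tvar_neq : b <> alpha.
Proof. intros ->. apply b_fresh, in_or_app. right; left; auto. Qed.

Lemma fresh_tvar_subst_ctx : ~ In (CTVar b) (Psi ++ subst_ctx alpha tau Psi').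
Proof.
  rewrite in_app_iff, in_subst_ctx_tvar. intros Hin.
  apply b_fresh. rewrite in_app_iff. simpl. tauto.
Qed.

Lemma fresh_tvar_subst_ty A : ~ In b (fv A) -> ~ In b (fv (subst_ty alpha tau A)).
Proof.
  intros HA Hb. destruct (fv_subst_ty _ _ _ _ Hb) as [Htau | [Hin _]]; auto.
  apply b_fresh, in_or_app. left. apply tau_wf; auto.
Qed.

End FreshTvar.

Lemma sub_subst G A B : sub G A B ->
  forall Psi', G = Psi ++ CTVar alpha :: Psi' ->
  sub (Psi ++ subst_ctx alpha tau Psi') (subst_ty alpha tau A) (subst_ty alpha tau B).
Proof.
  induction 1 as [G b Hb | G | G A1 A2 B1 B2 _ IH1 _ IH2
                 | G s A B Hs Hwf _ IH | G b A B Hb HA HB _ IH];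
    intros Psi' ->; simpl.
  - destruct (Nat.eqb_spec b alpha).
    + apply sub_refl_mono; auto.
      destruct tau_wf as [Hlc Hfv]. split; auto.
      intros c Hc. apply in_or_app; auto.
    + constructor. apply in_ctx_subst_tvar; auto.
  - constructor.
  - constructor; auto.
  - apply S_AllL with (subst_ty alpha tau s).
    + apply mono_subst_ty; auto.
    + apply wf_ty_subst; auto.
    + rewrite <- subst_open. auto.
  - apply S_AllR with b;
      [ apply fresh_tvar_subst_ctx | apply (fresh_tvar_subst_ty Psi').. | ]; auto.
    specialize (IH (Psi' ++ [CTVar b]) (app_cons_snoc _ _ _ _)).
    rewrite subst_ctx_snoc, subst_open_tvar in IH by exact (fresh_tvar_neq Psi' b Hb).
    exact IH.
Qed.

Scheme chk_mut := Induction for chk Sort Prop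
with syn_mut := Induction for syn Sort Prop
with appj_mut := Induction for appj Sort Prop.
Combined Scheme typing_mut from chk_mut, syn_mut, appj_mut.

Lemma typing_subst_tvar :
  (forall G e A n, chk G e A n ->
     forall Psi', G = Psi ++ CTVar alpha :: Psi' ->
     chk (Psi ++ subst_ctx alpha tau Psi') (subst_tm alpha tau e)
       (subst_ty alpha tau A) n) /\
  (forall G e A n, syn G e A n ->
     forall Psi', G = Psi ++ CTVar alpha :: Psi' ->
     syn (Psi ++ subst_ctx alpha tau Psi') (subst_tm alpha tau e)
       (subst_ty alpha tau A) n) /\
  (forall G e A C n, appj G e A C n ->
     forall Psi', G = Psi ++ CTVar alpha :: Psi' ->
     appj (Psi ++ subst_ctx alpha tau Psi') (subst_tm alpha tau e)
       (subst_ty alpha tau A) (subst_ty alpha tau C) n).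
Proof.
  apply typing_mut; simpl.
  - intros G e A B n _ IH Hsub Psi' ->.
    econstructor; eauto. eapply sub_subst; eauto.
  - intros; constructor.
  - intros G e b A n Hb HA _ IH Psi' ->.
    apply C_AllI with b;
      [ apply fresh_tvar_subst_ctx | apply (fresh_tvar_subst_ty Psi') | ]; auto.
    specialize (IH (Psi' ++ [CTVar b]) (app_cons_snoc _ _ _ _)).
    rewrite subst_ctx_snoc, subst_open_tvar in IH by exact (fresh_tvar_neq Psi' b Hb).
    exact IH.
  - intros G x e A B n _ IH Psi' ->.
    constructor.
    specialize (IH (Psi' ++ [CVar x A]) (app_cons_snoc _ _ _ _)).
    rewrite subst_ctx_snoc in IH. exact IH.
  - intros G x A Hin Psi' ->.
    constructor. rewrite in_app_iff in *. simpl in Hin.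
    destruct Hin as [Hin | [E | Hin]].
    + left. rewrite subst_ty_fresh; eauto.
    + discriminate.
    + right. apply (in_map (subst_entry alpha tau) _ _ Hin).
  - intros G e A n Hwf _ IH Psi' ->.
    constructor; auto. apply wf_ty_subst; auto.
  - intros; constructor.
  - intros G x e s s' n Hs Hs' Hwf _ IH Psi' ->.
    constructor; try apply mono_subst_ty; auto.
    + apply (wf_ty_subst Psi' (TArr s s')); auto.
    + specialize (IH (Psi' ++ [CVar x s]) (app_cons_snoc _ _ _ _)).
      rewrite subst_ctx_snoc in IH. exact IH.
  - intros G e1 e2 A C n1 n2 _ IH1 _ IH2 Psi' ->.
    econstructor; eauto.
  - intros G e s A C n Hs Hwf _ IH Psi' ->.
    apply A_All with (subst_ty alpha tau s).
    + apply mono_subst_ty; auto.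
    + apply wf_ty_subst; auto.
    + rewrite <- subst_open. auto.
  - intros G e A C n _ IH Psi' ->.
    constructor; auto.
Qed.

End SubstTvar.

Theorem mainTheorem19 (Psi Psi' : ctx) (alpha : nat) (tau : ty) :
  wf_ctx (Psi ++ CTVar alpha :: Psi') ->
  mono tau -> wf_ty Psi tau ->
  (forall e C n,
     chk (Psi ++ CTVar alpha :: Psi') e C n ->
     exists m, m <= n /\
       chk (Psi ++ subst_ctx alpha tau Psi') (subst_tm alpha tau e)
           (subst_ty alpha tau C) m) /\
  (forall e C n,
     syn (Psi ++ CTVar alpha :: Psi') e C n ->
     exists m, m <= n /\
       syn (Psi ++ subst_ctx alpha tau Psi') (subst_tm alpha tau e)
           (subst_ty alpha tau C) m) /\
  (forall e B C n,
     appj (Psi ++ CTVar alpha :: Psi') e B C n ->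
     exists m, m <= n /\
       appj (Psi ++ subst_ctx alpha tau Psi') (subst_tm alpha tau e)
           (subst_ty alpha tau B) (subst_ty alpha tau C) m).
Proof.
  intros Hwf Hmono Htau.
  pose proof (wf_ctx_prefix_types_fresh Psi Psi' alpha) as Hfresh.
  destruct (typing_subst_tvar Psi alpha tau Hmono Htau (fun x A => Hfresh x A Hwf))
    as [Hchk [Hsyn Happ]].
  repeat split; intros; exists n; split; eauto.
Qed.
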